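(* The variety $\mathsf V(M_2,S_c(ab))$ is finitely based; more precisely, it is the subvariety of $\mathbf F$ defined by the identities $x^3\approx x^2$, $xy\approx yx$ and $x_1x_2x_3\approx x_1^2+x_2^2+x_3^2$.
   Context: A flat semiring is an ai-semiring (semilattice $(S,+)$, semigroup $(S,\cdot)$, distributive laws) whose multiplicative reduct has a zero element $\infty$ and in which $x+y=\infty$ for all distinct $x,y$. $\mathbf F$ is the variety generated by all flat semirings. $M_2$ is the two-element flat semiring $\{1,\infty\}$ with $1\cdot1=1$. $S_c(ab)$ is the flat semiring $\{a,b,ab,\infty\}$ with $\infty$ a multiplicative zero, $ab=ba$ the element $ab$, and all other products ($a^2$, $b^2$, and any product with $ab$) equal to $\infty$. $\mathsf V(M_2,S_c(ab))$ is the variety generated by these two algebras. *)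

Record aisr : Type := AISR {
  carrier :> Type;
  sadd : carrier -> carrier -> carrier;
  smul : carrier -> carrier -> carrier;
  sadd_assoc : forall x y z, sadd x (sadd y z) = sadd (sadd x y) z;
  sadd_comm  : forall x y, sadd x y = sadd y x;
  sadd_idem  : forall x, sadd x x = x;
  smul_assoc : forall x y z, smul x (smul y z) = smul (smul x y) z;
  smul_addl  : forall x y z, smul x (sadd y z) = sadd (smul x y) (smul x z);
  smul_addr  : forall x y z, smul (sadd y z) x = sadd (smul y x) (smul z x)
}.

Definition flat (S : aisr) : Prop :=
  exists inf : S,
    (forall x : S, smul S inf x = inf /\ smul S x inf = inf) /\
    (forall x y : S, x <> y -> sadd S x y = inf).

Inductive term : Type :=
| Var : nat -> term
| Add : term -> term -> term
| Mul : term -> term -> term.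

Fixpoint eval (S : aisr) (env : nat -> S) (t : term) : S :=
  match t with
  | Var n => env n
  | Add t1 t2 => sadd S (eval S env t1) (eval S env t2)
  | Mul t1 t2 => smul S (eval S env t1) (eval S env t2)
  end.

Definition sat (S : aisr) (u v : term) : Prop :=
  forall env : nat -> S, eval S env u = eval S env v.

(** Membership in the variety generated by a class K of ai-semirings
    (equational description: S satisfies every identity valid in K). *)
Definition in_variety_gen (K : aisr -> Prop) (S : aisr) : Prop :=
  forall u v : term, (forall A : aisr, K A -> sat A u v) -> sat S u v.

Definition in_F (S : aisr) : Prop := in_variety_gen flat S.

Inductive m2 : Set := m2_one | m2_inf.

Definition m2_add (x y : m2) : m2 :=
  match x, y with m2_one, m2_one => m2_one | _, _ => m2_inf end.
Definition m2_mul (x y : m2) : m2 :=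
  match x, y with m2_one, m2_one => m2_one | _, _ => m2_inf end.

Definition M2 : aisr.
Proof.
  refine (@AISR m2 m2_add m2_mul _ _ _ _ _ _);
    intros; repeat match goal with x : m2 |- _ => destruct x end; reflexivity.
Defined.

Inductive scab : Set := sc_a | sc_b | sc_ab | sc_inf.

Definition scab_eqb (x y : scab) : bool :=
  match x, y with
  | sc_a, sc_a | sc_b, sc_b | sc_ab, sc_ab | sc_inf, sc_inf => true
  | _, _ => false
  end.

Definition scab_add (x y : scab) : scab := if scab_eqb x y then x else sc_inf.
Definition scab_mul (x y : scab) : scab :=
  match x, y with
  | sc_a, sc_b | sc_b, sc_a => sc_ab
  | _, _ => sc_inf
  end.

Definition Scab : aisr.
Proof.
  refine (@AISR scab scab_add scab_mul _ _ _ _ _ _);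
    intros; repeat match goal with x : scab |- _ => destruct x end; reflexivity.
Defined.

Definition K_M2_Scab (A : aisr) : Prop := A = M2 \/ A = Scab.

Definition x1 := Var 0.
Definition x2 := Var 1.
Definition x3 := Var 2.
Definition sq (t : term) := Mul t t.

Definition id_cube_l := Mul (sq x1) x1.
Definition id_cube_r := sq x1.
Definition id_comm_l := Mul x1 x2.
Definition id_comm_r := Mul x2 x1.
Definition id_3_l := Mul (Mul x1 x2) x3.
Definition id_3_r := Add (Add (sq x1) (sq x2)) (sq x3).

(* Under [xy ≈ yx], [x³ ≈ x²] and [x₁x₂x₃ ≈ x₁² + x₂² + x₃²] every term is a sum of atoms
   [x] and [xy], and an identity amounts to each atom of one side lying below the sum of
   the other.  A few identities of F generate a closure operator [derives] on atoms which
   is sound in every member of the axiomatised class.  Conversely an atom outside the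
   closure is separated from the sum in M₂ when it mentions a variable absent from the
   sum, and otherwise in S_c(ab): the derived products form a graph whose components are
   complete bipartite, and colouring its two sides by [a] and [b] (and derived variables
   by [ab]) evaluates the sum to [ab] but not the atom. *)

From Stdlib Require Import List Classical ClassicalEpsilon.
From Stdlib Require Import FunctionalExtensionality PropExtensionality.
Import ListNotations.

Notation "x ⊕ y" := (sadd _ x y) (at level 50, left associativity).
Notation "x ⊗ y" := (smul _ x y) (at level 40, left associativity).

Definition sle (A : aisr) (a b : A) : Prop := a ⊕ b = b.
Notation "a ≼ b" := (sle _ a b) (at level 70).

Lemma sle_refl (A : aisr) (a : A) : a ≼ a.
Proof. apply sadd_idem. Qed.

Lemma sle_trans (A : aisr) (a b c : A) : a ≼ b -> b ≼ c -> a ≼ c.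
Proof. unfold sle; intros Hab Hbc. rewrite <- Hbc, sadd_assoc, Hab. reflexivity. Qed.

Lemma sle_addl (A : aisr) (a b : A) : a ≼ a ⊕ b.
Proof. unfold sle. rewrite sadd_assoc, sadd_idem. reflexivity. Qed.

Lemma sle_addr (A : aisr) (a b : A) : b ≼ a ⊕ b.
Proof. unfold sle. rewrite (sadd_comm _ a b), sadd_assoc, sadd_idem. reflexivity. Qed.

Lemma sle_add_lub (A : aisr) (a b c : A) : a ≼ c -> b ≼ c -> a ⊕ b ≼ c.
Proof. unfold sle; intros Hac Hbc. rewrite <- sadd_assoc, Hbc, Hac. reflexivity. Qed.

Lemma sle_antisym (A : aisr) (a b : A) : a ≼ b -> b ≼ a -> a = b.
Proof. unfold sle; intros Hab Hba. rewrite <- Hab, <- Hba at 1. apply sadd_comm. Qed.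

Lemma sadd_swap (A : aisr) (a b c : A) : a ⊕ b ⊕ c = a ⊕ c ⊕ b.
Proof. rewrite <- !sadd_assoc, (sadd_comm _ b c). reflexivity. Qed.

Lemma flat_inf_addl (A : aisr) (inf : A) :
  (forall x y : A, x <> y -> x ⊕ y = inf) -> forall y, inf ⊕ y = inf.
Proof.
  intros Hadd y. destruct (classic (inf = y)) as [<- | Hne].
  - apply sadd_idem.
  - apply Hadd, Hne.
Qed.

(* [p + q] is [∞] unless [p = q], and [∞] absorbs sums. *)
Lemma flat_add_guard (A : aisr) (p q r r' : A) :
  flat A -> (p = q -> r = r') -> p ⊕ q ⊕ r = p ⊕ q ⊕ r'.
Proof.
  intros [inf [_ Hadd]] Hrr. destruct (classic (p = q)) as [Hpq | Hpq].
  - rewrite (Hrr Hpq). reflexivity.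
  - rewrite (Hadd p q Hpq), !(flat_inf_addl A inf Hadd). reflexivity.
Qed.

(* If [y <> z] but [xy = xz], then [xy = x(y + z) = x∞ = ∞]. *)
Lemma flat_mul_guard (A : aisr) (x y z r r' : A) :
  flat A -> (y = z -> r = r') -> x ⊗ y ⊕ x ⊗ z ⊕ r = x ⊗ y ⊕ x ⊗ z ⊕ r'.
Proof.
  intros [inf [Hmul Hadd]] Hrr. destruct (classic (y = z)) as [Hyz | Hyz].
  - rewrite (Hrr Hyz). reflexivity.
  - assert (Hsum : x ⊗ y ⊕ x ⊗ z = inf).
    { destruct (classic (x ⊗ y = x ⊗ z)) as [Heq | Hne]; [| apply Hadd, Hne].
      rewrite <- Heq, sadd_idem, <- (sadd_idem _ (x ⊗ y)).
      rewrite Heq at 2. rewrite <- smul_addl, (Hadd y z Hyz). apply Hmul. }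
    rewrite Hsum, !(flat_inf_addl A inf Hadd). reflexivity.
Qed.

Definition env4 (A : aisr) (a b c d : A) : nat -> A :=
  fun n => match n with 0 => a | 1 => b | 2 => c | _ => d end.

(* Each identity has the shape [p + q + r ≈ p + q + r'] of the two guard lemmas. *)
Section FlatIdentities.
Variable A : aisr.
Hypothesis HF : in_F A.

Lemma F_eq_mul_right (x y : A) : x ⊕ x ⊗ y ⊕ x ⊗ y = x ⊕ x ⊗ y ⊕ x ⊗ y ⊗ y.
Proof.
  refine (HF (Add (Add (Var 0) (Mul (Var 0) (Var 1))) (Mul (Var 0) (Var 1)))
             (Add (Add (Var 0) (Mul (Var 0) (Var 1))) (Mul (Mul (Var 0) (Var 1)) (Var 1)))
             _ (env4 A x y x x)).
  intros B HB env. apply flat_add_guard; [exact HB |]. cbn. intros E. rewrite <- E. exact E.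
Qed.

Lemma F_cancel_chain (x y z w : A) :
  y ⊗ x ⊕ y ⊗ z ⊕ z ⊗ w = y ⊗ x ⊕ y ⊗ z ⊕ x ⊗ w.
Proof.
  refine (HF (Add (Add (Mul (Var 1) (Var 0)) (Mul (Var 1) (Var 2))) (Mul (Var 2) (Var 3)))
             (Add (Add (Mul (Var 1) (Var 0)) (Mul (Var 1) (Var 2))) (Mul (Var 0) (Var 3)))
             _ (env4 A x y z w)).
  intros B HB env. apply flat_mul_guard; [exact HB |]. cbn. intros ->. reflexivity.
Qed.

Lemma F_cancel_sq (x : A) :
  x ⊗ x ⊕ x ⊗ (x ⊗ x) ⊕ x = x ⊗ x ⊕ x ⊗ (x ⊗ x) ⊕ x ⊗ x.
Proof.
  refine (HF (Add (Add (Mul (Var 0) (Var 0)) (Mul (Var 0) (Mul (Var 0) (Var 0)))) (Var 0))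
             (Add (Add (Mul (Var 0) (Var 0)) (Mul (Var 0) (Mul (Var 0) (Var 0))))
                  (Mul (Var 0) (Var 0)))
             _ (env4 A x x x x)).
  intros B HB env. apply flat_mul_guard; [exact HB |]. cbn. intros E. exact E.
Qed.

Lemma F_eq_sq (x z : A) : x ⊕ z ⊗ z ⊕ x ⊗ x = x ⊕ z ⊗ z ⊕ (z ⊗ z) ⊗ (z ⊗ z).
Proof.
  refine (HF (Add (Add (Var 0) (Mul (Var 1) (Var 1))) (Mul (Var 0) (Var 0)))
             (Add (Add (Var 0) (Mul (Var 1) (Var 1)))
                  (Mul (Mul (Var 1) (Var 1)) (Mul (Var 1) (Var 1))))
             _ (env4 A x z x x)).
  intros B HB env. apply flat_add_guard; [exact HB |]. cbn. intros ->. reflexivity.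
Qed.

End FlatIdentities.

Record basis_laws (A : aisr) : Prop := {
  mulC : forall a b : A, a ⊗ b = b ⊗ a;
  mul_cube : forall a : A, a ⊗ a ⊗ a = a ⊗ a;
  mul3_sq : forall a b c : A, a ⊗ b ⊗ c = a ⊗ a ⊕ b ⊗ b ⊕ c ⊗ c }.

Lemma basis_laws_sat (A : aisr) :
  basis_laws A <->
  sat A id_cube_l id_cube_r /\ sat A id_comm_l id_comm_r /\ sat A id_3_l id_3_r.
Proof.
  split.
  - intros [HC Hcube H3]. repeat split; intros env; cbn; auto.
  - intros (Hcube & HC & H3). split.
    + intros a b. exact (HC (env4 A a b b b)).
    + intros a. exact (Hcube (env4 A a a a a)).
    + intros a b c. exact (H3 (env4 A a b c c)).
Qed.

Lemma basis_M2 : basis_laws M2.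
Proof.
  split; intros; repeat match goal with x : carrier M2 |- _ => destruct x end; reflexivity.
Qed.

Lemma basis_Scab : basis_laws Scab.
Proof.
  split; intros; repeat match goal with x : carrier Scab |- _ => destruct x end; reflexivity.
Qed.

Lemma flat_M2 : flat M2.
Proof.
  exists m2_inf. split.
  - intros x; destruct x; split; reflexivity.
  - intros x y Hxy; destruct x, y; try reflexivity; congruence.
Qed.

Lemma flat_Scab : flat Scab.
Proof.
  exists sc_inf. split.
  - intros x; destruct x; split; reflexivity.
  - intros x y Hxy; destruct x, y; try reflexivity; congruence.
Qed.

Section BasisLaws.
Variable A : aisr.
Hypothesis G : basis_laws A.

Lemma sq_sq (z : A) : (z ⊗ z) ⊗ (z ⊗ z) = z ⊗ z.
Proof. rewrite smul_assoc, !(mul_cube A G). reflexivity. Qed.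

Lemma sq_mul (a b : A) : (a ⊗ b) ⊗ (a ⊗ b) = a ⊗ a ⊕ b ⊗ b.
Proof.
  assert (E : (a ⊗ b) ⊗ (a ⊗ b) = (a ⊗ a) ⊗ (b ⊗ b)).
  { rewrite !smul_assoc. f_equal. rewrite (mulC A G (a ⊗ b) a), smul_assoc. reflexivity. }
  rewrite E, (mul3_sq A G), sq_sq, sadd_idem. reflexivity.
Qed.

Hypothesis HF : in_F A.

Lemma add_sq_self (x : A) : x ⊕ x ⊗ x = x ⊗ x.
Proof.
  pose proof (F_cancel_sq A HF x) as E.
  rewrite smul_assoc, (mul_cube A G), !sadd_idem in E.
  rewrite sadd_comm. exact E.
Qed.

Lemma add_sq (x z : A) : x ⊕ z ⊗ z = x ⊗ x ⊕ z ⊗ z.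
Proof.
  pose proof (F_eq_sq A HF x z) as E.
  rewrite sq_sq, <- (sadd_assoc _ x (z ⊗ z) (z ⊗ z)), sadd_idem in E.
  rewrite <- E, sadd_swap, add_sq_self. reflexivity.
Qed.

Lemma sle_sq_iff (s z n : A) : z ⊗ z ≼ n -> (s ⊗ s ≼ n <-> s ≼ n).
Proof.
  intros Hz. split; intros Hs.
  - apply sle_trans with (s ⊕ z ⊗ z); [apply sle_addl |].
    rewrite add_sq. apply sle_add_lub; assumption.
  - apply sle_trans with (s ⊕ z ⊗ z); [| apply sle_add_lub; assumption].
    rewrite add_sq. apply sle_addl.
Qed.

Lemma sq_sle_add_mul (x y : A) : x ⊗ x ≼ x ⊕ x ⊗ y.
Proof.
  pose proof (F_eq_mul_right A HF x y) as E.
  rewrite (mul3_sq A G), <- (sadd_assoc _ x), sadd_idem in E.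
  rewrite E. eapply sle_trans; [| apply sle_addr].
  eapply sle_trans; apply sle_addl.
Qed.

Lemma mul_sle_chain (x y z w : A) : x ⊗ w ≼ y ⊗ x ⊕ y ⊗ z ⊕ z ⊗ w.
Proof. rewrite F_cancel_chain by exact HF. apply sle_addr. Qed.

End BasisLaws.

Inductive atom : Type := AL (x : nat) | AP (x y : nat).

Definition eval_atom (A : aisr) (env : nat -> A) (t : atom) : A :=
  match t with AL x => env x | AP x y => env x ⊗ env y end.

(* The value at [[]] is junk: the sums of atoms used below are never empty. *)
Fixpoint sum_atoms (A : aisr) (env : nat -> A) (l : list atom) : A :=
  match l with
  | [] => env 0
  | [t] => eval_atom A env t
  | t :: l' => eval_atom A env t ⊕ sum_atoms A env l'
  end.

Section SumAtoms.
Variables (A : aisr) (env : nat -> A).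

Lemma sum_atoms_cons (t : atom) (l : list atom) :
  l <> [] -> sum_atoms A env (t :: l) = eval_atom A env t ⊕ sum_atoms A env l.
Proof. destruct l; [congruence | reflexivity]. Qed.

Lemma atom_sle_sum (l : list atom) (t : atom) :
  In t l -> eval_atom A env t ≼ sum_atoms A env l.
Proof.
  induction l as [| s l IH]; [contradiction |].
  intros [<- | Hin]; destruct l as [| s' l]; try contradiction.
  - apply sle_refl.
  - apply sle_addl.
  - eapply sle_trans; [apply IH, Hin | apply sle_addr].
Qed.

Lemma sum_sle (l : list atom) (n : A) :
  l <> [] -> (forall t, In t l -> eval_atom A env t ≼ n) -> sum_atoms A env l ≼ n.
Proof.
  induction l as [| s l IH]; [congruence |]. intros _ Hl.
  destruct l as [| s' l]; [apply Hl; left; reflexivity |].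
  rewrite sum_atoms_cons by discriminate.
  apply sle_add_lub; [apply Hl; left; reflexivity |].
  apply IH; [discriminate | intros t Ht; apply Hl; right; exact Ht].
Qed.

Lemma sum_atoms_const (l : list atom) (c : A) :
  l <> [] -> (forall t, In t l -> eval_atom A env t = c) -> sum_atoms A env l = c.
Proof.
  intros Hne Hl. apply sle_antisym.
  - apply sum_sle; [exact Hne |]. intros t Ht. rewrite (Hl t Ht). apply sle_refl.
  - destruct l as [| t l]; [congruence |].
    rewrite <- (Hl t) by (left; reflexivity). apply atom_sle_sum. left; reflexivity.
Qed.

Lemma sum_atoms_app (l m : list atom) :
  l <> [] -> m <> [] -> sum_atoms A env (l ++ m) = sum_atoms A env l ⊕ sum_atoms A env m.
Proof.
  induction l as [| t l IH]; [congruence |]. intros _ Hm.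
  destruct l as [| t' l].
  - apply sum_atoms_cons, Hm.
  - rewrite <- app_comm_cons, !sum_atoms_cons, IH, sadd_assoc by (discriminate || auto).
    reflexivity.
Qed.

End SumAtoms.

Definition mul_atoms (s t : atom) : list atom :=
  match s, t with
  | AL x, AL y => [AP x y]
  | AL x, AP y z | AP x y, AL z => [AP x x; AP y y; AP z z]
  | AP x y, AP z w => [AP x x; AP y y; AP z z; AP w w]
  end.

Definition mul_sums (l m : list atom) : list atom :=
  flat_map (fun s => flat_map (mul_atoms s) m) l.

Fixpoint nf (u : term) : list atom :=
  match u with
  | Var n => [AL n]
  | Add u v => nf u ++ nf v
  | Mul u v => mul_sums (nf u) (nf v)
  end.

Lemma flat_map_ne (f : atom -> list atom) (l : list atom) :
  (forall s, f s <> []) -> l <> [] -> flat_map f l <> [].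
Proof.
  intros Hf Hl. destruct l as [| s l]; [congruence |]. cbn.
  destruct (f s) eqn:E; [destruct (Hf s E) | discriminate].
Qed.

Lemma mul_atoms_ne (s t : atom) : mul_atoms s t <> [].
Proof. destruct s, t; discriminate. Qed.

Lemma nf_ne (u : term) : nf u <> [].
Proof.
  induction u as [n | u IHu v IHv | u IHu v IHv]; cbn.
  - discriminate.
  - destruct (nf u); [congruence | discriminate].
  - apply flat_map_ne; [| exact IHu]. intros s.
    apply flat_map_ne; [apply mul_atoms_ne | exact IHv].
Qed.

Lemma sum_flat_map (A : aisr) (env : nat -> A) (f : atom -> list atom) (phi : A -> A)
    (l : list atom) :
  (forall a b, phi (a ⊕ b) = phi a ⊕ phi b) -> (forall s, f s <> []) ->
  (forall s, sum_atoms A env (f s) = phi (eval_atom A env s)) -> l <> [] ->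
  sum_atoms A env (flat_map f l) = phi (sum_atoms A env l).
Proof.
  intros Hphi Hne Hf. induction l as [| s l IH]; [congruence |]. intros _.
  destruct l as [| s' l].
  - cbn. rewrite app_nil_r. apply Hf.
  - change (flat_map f (s :: s' :: l)) with (f s ++ flat_map f (s' :: l)).
    rewrite sum_atoms_app, IH, (sum_atoms_cons A env s (s' :: l)), Hphi, Hf by
      (discriminate || apply Hne || (apply flat_map_ne; [exact Hne | discriminate])).
    reflexivity.
Qed.

Section NormalForm.
Variable A : aisr.
Hypothesis G : basis_laws A.
Variable env : nat -> A.

Lemma mul_atoms_sound (s t : atom) :
  sum_atoms A env (mul_atoms s t) = eval_atom A env s ⊗ eval_atom A env t.
Proof.
  destruct s as [x | x y], t as [z | z w]; cbn.
  - reflexivity.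
  - rewrite smul_assoc, (mul3_sq A G), sadd_assoc. reflexivity.
  - rewrite (mul3_sq A G), sadd_assoc. reflexivity.
  - rewrite (mul3_sq A G), (sq_mul A G), !sadd_assoc. reflexivity.
Qed.

Lemma mul_sums_sound (l m : list atom) :
  l <> [] -> m <> [] ->
  sum_atoms A env (mul_sums l m) = sum_atoms A env l ⊗ sum_atoms A env m.
Proof.
  intros Hl Hm. unfold mul_sums.
  apply (sum_flat_map A env _ (fun a => a ⊗ sum_atoms A env m)); [| | | exact Hl].
  - intros a b. apply smul_addr.
  - intros s. apply flat_map_ne; [apply mul_atoms_ne | exact Hm].
  - intros s. apply (sum_flat_map A env _ (fun b => eval_atom A env s ⊗ b)); [| | | exact Hm].
    + intros a b. apply smul_addl.
    + apply mul_atoms_ne.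
    + apply mul_atoms_sound.
Qed.

Lemma nf_sound (u : term) : eval A env u = sum_atoms A env (nf u).
Proof.
  induction u as [n | u IHu v IHv | u IHu v IHv]; cbn [eval nf].
  - reflexivity.
  - rewrite sum_atoms_app by apply nf_ne. congruence.
  - rewrite mul_sums_sound by apply nf_ne. congruence.
Qed.

End NormalForm.

Definition var_of (x : nat) (t : atom) : Prop :=
  match t with AL y => x = y | AP y z => x = y \/ x = z end.

Definition occurs (N : list atom) (x : nat) : Prop := exists s, In s N /\ var_of x s.

Inductive derives (N : list atom) : atom -> Prop :=
| der_in t : In t N -> derives N t
| der_sq_AP z x y : derives N (AP z z) -> occurs N x -> occurs N y -> derives N (AP x y)
| der_sq_AL z x : derives N (AP z z) -> occurs N x -> derives N (AL x)
| der_AL_AP x y : derives N (AL x) -> derives N (AP x y) -> derives N (AP x x)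
| der_sym x y : derives N (AP x y) -> derives N (AP y x)
| der_chain x y z w :
    derives N (AP x y) -> derives N (AP y z) -> derives N (AP z w) -> derives N (AP x w).

Section Soundness.
Variable A : aisr.
Hypotheses (HF : in_F A) (G : basis_laws A).
Variables (env : nat -> A) (N : list atom).

Lemma occurs_sq_sle (x z : nat) :
  occurs N x -> env z ⊗ env z ≼ sum_atoms A env N -> env x ⊗ env x ≼ sum_atoms A env N.
Proof.
  intros [s [Hs Hx]] Hz.
  pose proof (proj2 (sle_sq_iff A G HF _ _ _ Hz) (atom_sle_sum A env N s Hs)) as Hss.
  destruct s as [y | y w]; cbn in Hx, Hss.
  - subst. exact Hss.
  - rewrite (sq_mul A G) in Hss.
    destruct Hx; subst; eapply sle_trans; try exact Hss; [apply sle_addl | apply sle_addr].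
Qed.

Lemma derives_sound (t : atom) : derives N t -> eval_atom A env t ≼ sum_atoms A env N.
Proof.
  induction 1 as [t Ht | z x y _ IHz Hx Hy | z x _ IHz Hx | x y _ IHx _ IHxy
                 | x y _ IH | x y z w _ IHxy _ IHyz _ IHzw]; cbn in *.
  - apply atom_sle_sum, Ht.
  - apply (sle_sq_iff A G HF _ _ _ IHz). rewrite (sq_mul A G).
    apply sle_add_lub; apply occurs_sq_sle with z; assumption.
  - apply (sle_sq_iff A G HF _ _ _ IHz). apply occurs_sq_sle with z; assumption.
  - eapply sle_trans; [apply (sq_sle_add_mul A G HF _ (env y)) | apply sle_add_lub; assumption].
  - rewrite (mulC A G). exact IH.
  - eapply sle_trans; [apply (mul_sle_chain A HF _ (env y) (env z)) |].
    repeat apply sle_add_lub; try assumption. rewrite (mulC A G). exact IHxy.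
Qed.

End Soundness.

Section TwoColouring.
Variables (T : Type) (P : T -> T -> Prop).
Hypotheses (P_sym : forall x y, P x y -> P y x)
           (P_chain : forall x y z w, P x y -> P y z -> P z w -> P x w)
           (P_irrefl : forall x, ~ P x x).

Definition within2 (r v : T) : Prop := r = v \/ P r v \/ exists w, P r w /\ P w v.

Lemma within2_sym (a b : T) : within2 a b -> within2 b a.
Proof.
  intros [-> | [Hab | [w [Haw Hwb]]]]; unfold within2.
  - left; reflexivity.
  - right; left; auto.
  - right; right; exists w; auto.
Qed.

Lemma within2_trans (a b c : T) : within2 a b -> within2 b c -> within2 a c.
Proof.
  intros [-> | [Hab | [w [Haw Hwb]]]] [<- | [Hbc | [w' [Hbw' Hw'c]]]]; unfold within2;
    first [ assumption | (left; reflexivity) | (right; left; assumption)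
          | (right; right; eexists; split; eassumption)
          | (right; left; eapply P_chain; eassumption)
          | (right; right; exists w'; split; [eapply P_chain; eassumption | assumption]) ].
Qed.

Variables x y : T.

(* Every component of [P] is complete bipartite; the side of [v] is whether it is adjacent to
   the root of its component.  Components meeting [x] or [y] are rooted there, so [x] and [y]
   lie on the non-adjacent side. *)
Definition component_root (v : T) : T :=
  if excluded_middle_informative (within2 x v) then x
  else if excluded_middle_informative (within2 y v) then y
  else epsilon (inhabits x) (fun r => within2 r v).

Lemma component_root_within2 (v : T) : within2 (component_root v) v.
Proof.
  unfold component_root.
  destruct (excluded_middle_informative (within2 x v)) as [Hx | _]; [exact Hx |].
  destruct (excluded_middle_informative (within2 y v)) as [Hy | _]; [exact Hy |].
  apply epsilon_spec. exists v. left; reflexivity.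
Qed.

Lemma component_root_eq (v v' : T) : within2 v v' -> component_root v = component_root v'.
Proof.
  intros Hvv'. unfold component_root.
  assert (Htr : forall r, within2 r v <-> within2 r v').
  { intros r; split; intros H; eapply within2_trans; eauto using within2_sym. }
  destruct (excluded_middle_informative (within2 x v)) as [Hx | Hx],
           (excluded_middle_informative (within2 x v')) as [Hx' | Hx'];
    [reflexivity | exfalso; apply Hx', Htr, Hx | exfalso; apply Hx, Htr, Hx' |].
  destruct (excluded_middle_informative (within2 y v)) as [Hy | Hy],
           (excluded_middle_informative (within2 y v')) as [Hy' | Hy'];
    [reflexivity | exfalso; apply Hy', Htr, Hy | exfalso; apply Hy, Htr, Hy' |].
  f_equal. apply functional_extensionality. intros r.
  apply propositional_extensionality, Htr.
Qed.

Definition side_colour (v : T) : bool :=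
  if excluded_middle_informative (P (component_root v) v) then true else false.

Lemma side_colour_proper (u v : T) : P u v -> side_colour u <> side_colour v.
Proof.
  intros Huv. unfold side_colour.
  assert (Hr : component_root v = component_root u)
    by (symmetry; apply component_root_eq; right; left; exact Huv).
  rewrite Hr. pose proof (component_root_within2 u) as Hru. set (r := component_root u) in *.
  destruct (excluded_middle_informative (P r u)) as [Hu | Hu],
           (excluded_middle_informative (P r v)) as [Hv | Hv]; try discriminate.
  - exfalso. apply (P_irrefl r). apply P_chain with u v; auto.
  - exfalso. apply Hv.
    destruct Hru as [-> | [Hru | [w [Hrw Hwu]]]]; [exact Huv | contradiction |].
    apply P_chain with w u; assumption.
Qed.

Lemma side_colour_eq : ~ P x y -> side_colour x = side_colour y.
Proof.
  intros Hxy. unfold side_colour, component_root.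
  destruct (excluded_middle_informative (within2 x x)) as [_ | Hxx];
    [| exfalso; apply Hxx; left; reflexivity].
  destruct (excluded_middle_informative (P x x)) as [Hxx | _];
    [exfalso; exact (P_irrefl x Hxx) |].
  destruct (excluded_middle_informative (within2 x y)) as [_ | _].
  - destruct (excluded_middle_informative (P x y)); [contradiction | reflexivity].
  - destruct (excluded_middle_informative (within2 y y)) as [_ | Hyy];
      [| exfalso; apply Hyy; left; reflexivity].
    destruct (excluded_middle_informative (P y y)) as [Hyy | _];
      [exfalso; exact (P_irrefl y Hyy) | reflexivity].
Qed.

Lemma two_colouring :
  ~ P x y -> exists c : T -> bool, (forall u v, P u v -> c u <> c v) /\ c x = c y.
Proof.
  intros Hxy. exists side_colour.
  split; [exact side_colour_proper | exact (side_colour_eq Hxy)].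
Qed.

End TwoColouring.

Lemma occurs_of_M2 (N : list atom) (t : atom) :
  N <> [] -> (forall env, eval_atom M2 env t ≼ sum_atoms M2 env N) ->
  forall v, var_of v t -> occurs N v.
Proof.
  intros Hne HM v Hv. apply NNPP; intros Hnv.
  set (env := fun w => if excluded_middle_informative (occurs N w) then m2_one else m2_inf).
  assert (Hocc : forall w s, In s N -> var_of w s -> env w = m2_one).
  { intros w s Hs Hw. unfold env.
    destruct (excluded_middle_informative (occurs N w)) as [_ | Hw']; [reflexivity |].
    exfalso. apply Hw'. exists s. split; assumption. }
  assert (Hsum : sum_atoms M2 env N = m2_one).
  { apply sum_atoms_const; [exact Hne |]. intros [x | x y] Hs; cbn.
    - apply (Hocc x _ Hs). reflexivity.
    - rewrite (Hocc x _ Hs), (Hocc y _ Hs); cbn; auto. }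
  assert (Henv : env v = m2_inf).
  { unfold env.
    destruct (excluded_middle_informative (occurs N v)); [contradiction | reflexivity]. }
  specialize (HM env). unfold sle in HM. rewrite Hsum in HM.
  destruct t as [x | x y]; cbn in Hv, HM; [subst x | destruct Hv; subst];
    rewrite Henv in HM; [| | destruct (env x)]; discriminate.
Qed.

Lemma scab_sle_ab (s : Scab) : s ≼ sc_ab -> s = sc_ab.
Proof. unfold sle. destruct s; cbn; congruence. Qed.

Definition fst_var (t : atom) : nat := match t with AL x | AP x _ => x end.
Definition snd_var (t : atom) : nat := match t with AL x | AP _ x => x end.

(* Derived variables are sent to [ab], the two sides of each component of the graph of
   derived products to [a] and [b]. *)
Section ScabCountermodel.
Variable N : list atom.
Hypothesis no_sq : forall z, ~ derives N (AP z z).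
Variable c : nat -> bool.
Hypothesis c_proper : forall u v, derives N (AP u v) -> c u <> c v.

Definition scab_env (v : nat) : Scab :=
  if excluded_middle_informative (derives N (AL v)) then sc_ab
  else if c v then sc_b else sc_a.

Lemma scab_env_colour (u : nat) : ~ derives N (AL u) -> scab_env u = if c u then sc_b else sc_a.
Proof.
  intros Hu. unfold scab_env. destruct (excluded_middle_informative (derives N (AL u)));
    [contradiction | reflexivity].
Qed.

Lemma scab_env_derived (t : atom) : derives N t -> eval_atom Scab scab_env t = sc_ab.
Proof.
  intros Ht. destruct t as [u | u v]; cbn.
  - unfold scab_env. destruct (excluded_middle_informative (derives N (AL u)));
      [reflexivity | contradiction].
  - assert (Hu : ~ derives N (AL u))
      by (intros Hu; apply (no_sq u), der_AL_AP with v; assumption).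
    assert (Hv : ~ derives N (AL v))
      by (intros Hv; apply (no_sq v), der_AL_AP with u; [| apply der_sym]; assumption).
    rewrite (scab_env_colour u Hu), (scab_env_colour v Hv).
    pose proof (c_proper u v Ht). destruct (c u), (c v); cbn; congruence.
Qed.

Lemma scab_env_underived (t : atom) :
  c (fst_var t) = c (snd_var t) -> ~ derives N t -> eval_atom Scab scab_env t <> sc_ab.
Proof.
  intros Hc Ht. destruct t as [u | u v]; cbn in *.
  - unfold scab_env. destruct (excluded_middle_informative (derives N (AL u)));
      [contradiction | destruct (c u); discriminate].
  - unfold scab_env.
    destruct (excluded_middle_informative (derives N (AL u))),
             (excluded_middle_informative (derives N (AL v)));
      rewrite ?Hc; destruct (c v); cbn; discriminate.
Qed.

End ScabCountermodel.

Lemma derives_complete (N : list atom) (t : atom) :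
  N <> [] ->
  (forall env, eval_atom M2 env t ≼ sum_atoms M2 env N) ->
  (forall env, eval_atom Scab env t ≼ sum_atoms Scab env N) ->
  derives N t.
Proof.
  intros Hne HM HS. apply NNPP; intros Ht.
  pose proof (occurs_of_M2 N t Hne HM) as Hocc.
  assert (no_sq : forall z, ~ derives N (AP z z)).
  { intros z Hz. apply Ht. destruct t as [x | x y].
    - apply der_sq_AL with z; [exact Hz |]. apply Hocc. reflexivity.
    - apply der_sq_AP with z; [exact Hz | |]; apply Hocc; cbn; auto. }
  destruct (two_colouring nat (fun u v => derives N (AP u v)) (der_sym N)
              (der_chain N) no_sq (fst_var t) (snd_var t)) as [c [Hc Hct]].
  { destruct t as [x | x y]; [apply no_sq | exact Ht]. }
  specialize (HS (scab_env N c)).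
  rewrite (sum_atoms_const Scab _ N sc_ab Hne) in HS
    by (intros s Hs; apply scab_env_derived; [exact no_sq | exact Hc | apply der_in, Hs]).
  exact (scab_env_underived N c t Hct Ht (scab_sle_ab _ HS)).
Qed.

Lemma sat_sym (A : aisr) (u v : term) : sat A u v -> sat A v u.
Proof. intros H env. symmetry. apply H. Qed.

Definition entails (N M : list atom) : Prop := forall t, In t M -> derives N t.

Lemma entails_of_generators (u v : term) :
  sat M2 u v -> sat Scab u v -> entails (nf u) (nf v).
Proof.
  intros HM HS t Ht. apply derives_complete; [apply nf_ne | |]; intros env.
  - rewrite <- (nf_sound M2 basis_M2), (HM env), (nf_sound M2 basis_M2).
    apply atom_sle_sum, Ht.
  - rewrite <- (nf_sound Scab basis_Scab), (HS env), (nf_sound Scab basis_Scab).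
    apply atom_sle_sum, Ht.
Qed.

Lemma sat_of_entails (A : aisr) (u v : term) :
  in_F A -> basis_laws A -> entails (nf u) (nf v) -> entails (nf v) (nf u) -> sat A u v.
Proof.
  intros HF G Huv Hvu env. rewrite !(nf_sound A G).
  apply sle_antisym; apply sum_sle; try apply nf_ne; intros t Ht;
    apply derives_sound; auto.
Qed.

Theorem proposition3p15 :
  forall S : aisr,
    in_variety_gen K_M2_Scab S <->
    (in_F S /\ sat S id_cube_l id_cube_r /\ sat S id_comm_l id_comm_r
            /\ sat S id_3_l id_3_r).
Proof.
  intros S. split.
  - intros HS. split.
    + intros u v Huv. apply HS. intros A [-> | ->]; apply Huv; [exact flat_M2 | exact flat_Scab].
    + assert (Hgen : forall A, K_M2_Scab A -> basis_laws A)
        by (intros A [-> | ->]; [exact basis_M2 | exact basis_Scab]).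
      repeat split; apply HS; intros A HA;
        destruct (proj1 (basis_laws_sat A) (Hgen A HA)) as (? & ? & ?); assumption.
  - intros [HF Hid] u v Hgen. apply basis_laws_sat in Hid.
    assert (HM : sat M2 u v) by (apply Hgen; left; reflexivity).
    assert (HSc : sat Scab u v) by (apply Hgen; right; reflexivity).
    apply sat_of_entails; [exact HF | exact Hid | |]; apply entails_of_generators;
      auto using sat_sym.
Qed.
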